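(* Let $A \in \mathrm{Sp}(n,1)$ be a hyperbolic element written as $A=i_1i_2$ with $i_1,i_2\in\mathrm{Sp}(n,1)$ and $i_1^2=i_2^2=-I$. Then each of $i_1$ and $i_2$ maps the set of the two boundary fixed points of $A$ to itself.
   Context: $\mathbb{H}^{n+1}$ is a right $\mathbb{H}$-vector space with Hermitian form $\langle \mathbf z,\mathbf w\rangle = \bar w_{n+1} z_1 + \sum_{i=2}^{n} \bar w_i z_i + \bar w_1 z_{n+1}$; $\mathrm{Sp}(n,1)$ is the group of quaternionic matrices preserving it, acting on the boundary of quaternionic hyperbolic space (the set of right quaternionic lines of nonzero null vectors). An element is hyperbolic if it has exactly two fixed points on this boundary. *)

From HB Require Import structures.
From mathcomp Require Import all_boot all_order all_algebra.
From mathcomp Require Import ring.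
From mathcomp Require Import reals.
Set Implicit Arguments. Unset Strict Implicit. Unset Printing Implicit Defensive.
Import Order.TTheory GRing.Theory Num.Theory.
Local Open Scope ring_scope.

Section Quaternions.
Variable R : realType.

(* q = qr + qi i + qj j + qk k *)
Record quat := Quat { qr : R; qi : R; qj : R; qk : R }.

Definition quat2tuple (q : quat) := (qr q, qi q, qj q, qk q).
Definition tuple2quat (t : R * R * R * R) :=
  let: (a, b, c, d) := t in Quat a b c d.
Lemma quat2tupleK : cancel quat2tuple tuple2quat. Proof. by case. Qed.
HB.instance Definition _ := Equality.copy quat (can_type quat2tupleK).
HB.instance Definition _ := Choice.copy quat (can_type quat2tupleK).

Definition qzero := Quat 0 0 0 0.
Definition qone := Quat 1 0 0 0.
Definition qadd (p q : quat) :=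
  Quat (qr p + qr q) (qi p + qi q) (qj p + qj q) (qk p + qk q).
Definition qopp (p : quat) := Quat (- qr p) (- qi p) (- qj p) (- qk p).
(* Hamilton product: i^2 = j^2 = k^2 = ijk = -1 *)
Definition qmul (p q : quat) :=
  Quat (qr p * qr q - qi p * qi q - qj p * qj q - qk p * qk q)
       (qr p * qi q + qi p * qr q + qj p * qk q - qk p * qj q)
       (qr p * qj q - qi p * qk q + qj p * qr q + qk p * qi q)
       (qr p * qk q + qi p * qj q - qj p * qi q + qk p * qr q).
Definition qconj (p : quat) := Quat (qr p) (- qi p) (- qj p) (- qk p).

Lemma quatP (p q : quat) :
  qr p = qr q -> qi p = qi q -> qj p = qj q -> qk p = qk q -> p = q.
Proof. by case: p q => [????] [????] /= -> -> -> ->. Qed.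

Lemma qaddA : associative qadd.
Proof. by move=> [????] [????] [????]; apply: quatP => /=; ring. Qed.
Lemma qaddC : commutative qadd.
Proof. by move=> [????] [????]; apply: quatP => /=; ring. Qed.
Lemma qadd0 : left_id qzero qadd.
Proof. by move=> [????]; apply: quatP => /=; ring. Qed.
Lemma qaddN : left_inverse qzero qopp qadd.
Proof. by move=> [????]; apply: quatP => /=; ring. Qed.

HB.instance Definition _ := GRing.isZmodule.Build quat qaddA qaddC qadd0 qaddN.

Lemma qmulA : associative qmul.
Proof. by move=> [????] [????] [????]; apply: quatP => /=; ring. Qed.
Lemma qmul1 : left_id qone qmul.
Proof. by move=> [????]; apply: quatP => /=; ring. Qed.
Lemma qmulr1 : right_id qone qmul.
Proof. by move=> [????]; apply: quatP => /=; ring. Qed.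
Lemma qmulDl : left_distributive qmul +%R.
Proof. by move=> [????] [????] [????]; apply: quatP => /=; ring. Qed.
Lemma qmulDr : right_distributive qmul +%R.
Proof. by move=> [????] [????] [????]; apply: quatP => /=; ring. Qed.
Lemma qone_neq0 : qone != 0.
Proof. by apply/eqP => /(congr1 qr) /= /eqP; rewrite oner_eq0. Qed.

HB.instance Definition _ :=
  GRing.Zmodule_isNzRing.Build quat qmulA qmul1 qmulr1 qmulDl qmulDr qone_neq0.

End Quaternions.

Section SpN1.
Variable R : realType.
Variable n : nat.
(* H^{n+1} is represented by column vectors 'cV[quat R]_(n.+1), with
   coordinates z_1, ..., z_{n+1} stored at indices 0, ..., n. *)
Local Notation vec := 'cV[quat R]_(n.+1).
Local Notation mat := 'M[quat R]_(n.+1).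

Definition hform (z w : vec) : quat R :=
  qconj (w ord_max 0) * z ord0 0
  + \sum_(i < n.+1 | (0 < (i : nat) < n)%N) qconj (w i 0) * z i 0
  + qconj (w ord0 0) * z ord_max 0.

Definition in_Spn1 (A : mat) : Prop :=
  forall z w : vec, hform (A *m z) (A *m w) = hform z w.

Definition rscale (z : vec) (l : quat R) : vec := \col_i (z i 0 * l).

(* nonzero null vectors: representatives of boundary points *)
Definition null_nonzero (z : vec) : Prop := z != 0 /\ hform z z = 0.

Definition same_line (z w : vec) : Prop :=
  exists l : quat R, l != 0 /\ w = rscale z l.

Definition fixes_bpoint (A : mat) (z : vec) : Prop :=
  null_nonzero z /\ exists l : quat R, l != 0 /\ A *m z = rscale z l.

Definition hyperbolic (A : mat) : Prop :=
  exists z1 z2 : vec,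
    [/\ fixes_bpoint A z1, fixes_bpoint A z2, ~ same_line z1 z2 &
        forall w : vec, fixes_bpoint A w -> same_line z1 w \/ same_line z2 w].

End SpN1.

(* Since i1^2 = i2^2 = -1, the matrix B = i2 i1 is the inverse of A = i1 i2,
   and both i1 and i2 intertwine A with B: A i1 = i1 B and A i2 = i2 B.
   A boundary point fixed by A is fixed by its inverse B, so its image under
   i1 or i2 is again fixed by A. *)
From HB Require Import structures.
From mathcomp Require Import all_boot all_order all_algebra.
From mathcomp Require Import reals.
From mathcomp Require Import ring lra.
Import GRing.Theory.
Local Open Scope ring_scope.

Lemma quat_rinv_exists {R : realType} {l : quat R} :
  l != 0 -> exists m : quat R, l * m = 1.
Proof.
case: l => a b c d l_neq0.
set N := a * a + b * b + c * c + d * d.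
have N_neq0 : N != 0.
  apply: contra l_neq0 => /eqP; rewrite /N => N0.
  by have [-> -> -> ->] : [/\ a = 0, b = 0, c = 0 & d = 0] by split; nra.
exists (Quat (a / N) (- b / N) (- c / N) (- d / N)).
by apply: quatP => /=; rewrite /N in N_neq0 *; field.
Qed.

Section BoundaryFixedPoints.
Context {R : realType} {n : nat}.
Local Notation vec := 'cV[quat R]_(n.+1).
Local Notation mat := 'M[quat R]_(n.+1).

Lemma mulmx_rscale (M : mat) (z : vec) l :
  M *m rscale z l = rscale (M *m z) l.
Proof.
apply/matrixP => i j; rewrite !mxE mulr_suml; apply: eq_bigr => k _.
by rewrite !mxE mulrA.
Qed.

Lemma rscaleA (z : vec) l m : rscale (rscale z l) m = rscale z (l * m).
Proof. by apply/matrixP => i j; rewrite !mxE mulrA. Qed.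

Lemma rscale1 (z : vec) : rscale z 1 = z.
Proof. by apply/matrixP => i j; rewrite !mxE mulr1 (ord1 j). Qed.

Lemma null_nonzero_mul {M N : mat} {z : vec} :
  in_Spn1 M -> N *m M = 1%:M -> null_nonzero z -> null_nonzero (M *m z).
Proof.
move=> SpM NM1 [z_neq0 zz0]; split; last by rewrite SpM.
apply: contra z_neq0 => /eqP Mz0.
by rewrite -[z]mul1mx -NM1 -mulmxA Mz0 mulmx0.
Qed.

Lemma fixes_bpoint_inv {A B : mat} {z : vec} :
  B *m A = 1%:M -> fixes_bpoint A z -> fixes_bpoint B z.
Proof.
move=> BA1 [nz [l [l_neq0 Az]]]; split => //.
have [m lm1] := quat_rinv_exists l_neq0.
exists m; split.
  by apply: contra_eq_neq lm1 => ->; rewrite mulr0 eq_sym oner_neq0.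
have BzlE : rscale (B *m z) l = z.
  by rewrite -mulmx_rscale -Az mulmxA BA1 mul1mx.
by rewrite -[B *m z]rscale1 -lm1 -rscaleA BzlE.
Qed.

Lemma fixes_bpoint_intertwine {A B C N : mat} {z : vec} :
  in_Spn1 C -> N *m C = 1%:M -> A *m C = C *m B ->
  fixes_bpoint B z -> fixes_bpoint A (C *m z).
Proof.
move=> SpC NC1 AC [nz [m [m_neq0 Bz]]]; split.
  exact: null_nonzero_mul SpC NC1 nz.
by exists m; split; rewrite // mulmxA AC -mulmxA Bz mulmx_rscale.
Qed.

Lemma anti_involution_linv {i : mat} : i *m i = - 1%:M -> (- i) *m i = 1%:M.
Proof. by move=> i_sq; rewrite mulNmx i_sq opprK. Qed.

Section AntiInvolutions.
Variables i1 i2 : mat.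
Hypotheses (i1_sq : i1 *m i1 = - 1%:M) (i2_sq : i2 *m i2 = - 1%:M).

Lemma anti_involutions_mul_linv : (i2 *m i1) *m (i1 *m i2) = 1%:M.
Proof.
by rewrite mulmxA -(mulmxA i2) i1_sq mulmxN mulmx1 mulNmx i2_sq opprK.
Qed.

Lemma anti_involutions_intertwine : (i1 *m i2) *m i2 = i2 *m (i2 *m i1).
Proof.
by rewrite -!mulmxA i2_sq mulmxA i2_sq mulmxN mulmx1 mulNmx mul1mx.
Qed.

End AntiInvolutions.

End BoundaryFixedPoints.

Theorem lemma2p3 (R : realType) (n : nat) (A i1 i2 : 'M[quat R]_(n.+1)) :
  (1 <= n)%N ->
  in_Spn1 A -> in_Spn1 i1 -> in_Spn1 i2 ->
  hyperbolic A ->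
  A = i1 *m i2 ->
  i1 *m i1 = - 1%:M -> i2 *m i2 = - 1%:M ->
  (forall z : 'cV[quat R]_(n.+1),
      fixes_bpoint A z -> fixes_bpoint A (i1 *m z)) /\
  (forall z : 'cV[quat R]_(n.+1),
      fixes_bpoint A z -> fixes_bpoint A (i2 *m z)).
Proof.
move=> _ _ Sp1 Sp2 _ -> i1_sq i2_sq.
have fixB z : fixes_bpoint (i1 *m i2) z -> fixes_bpoint (i2 *m i1) z.
  exact/fixes_bpoint_inv/anti_involutions_mul_linv.
split=> z /fixB fixBz.
- apply: fixes_bpoint_intertwine Sp1 (anti_involution_linv i1_sq) _ fixBz.
  by rewrite mulmxA.
- apply: fixes_bpoint_intertwine Sp2 (anti_involution_linv i2_sq) _ fixBz.
  exact: anti_involutions_intertwine.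
Qed.
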